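(* For every tree metric and every $\alpha>0$, the greedy-routing network creation game with edge price $\alpha$ is weakly acyclic under best responses: from every strategy profile there is a finite sequence of profiles, each obtained from the previous one by a single agent switching to a best response, that ends in a Nash equilibrium.
   Context: A tree metric on a finite set $\mathcal{P}$ is given by a spanning tree $T$ on $\mathcal{P}$ with positive edge weights, $d(x,y)=d_T(x,y)$ being the weight of the unique $x$–$y$ path in $T$. Game: agents are the points of $\mathcal{P}$; agent $u$'s strategy is $S_u\subseteq\mathcal{P}\setminus\{u\}$; a profile $\mathbf{s}$ defines the directed network with arcs $(u,v)$, $v\in S_u$, of length $d(u,v)$. A greedy path from $u$ to $v$ is a directed path $u=x_1,\dots,x_j=v$ of arcs with $d(x_i,v)>d(x_{i+1},v)$ for all $i$. $\mathrm{stretch}(u,v)$ is the minimum length of a greedy path from $u$ to $v$ divided by $d(u,v)$, or a fixed sufficiently large penalty constant $Z$ if none exists. Cost: $c_u(\mathbf{s})=\sum_{v\ne u}\mathrm{stretch}(u,v)+\alpha|S_u|$. A best response of $u$ to $\mathbf{s}$ is a strategy minimizing $c_u(\cdot,\mathbf{s}_{-u})$; a Nash equilibrium is a profile where every agent plays a best response. *)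

From mathcomp Require Import all_boot all_order all_algebra.
Set Implicit Arguments. Unset Strict Implicit. Unset Printing Implicit Defensive.
Import Order.TTheory GRing.Theory Num.Theory.
Local Open Scope ring_scope.

Section Game.
Variables (R : realFieldType) (T : finType).

Fixpoint wlen (w : T -> T -> R) (x : T) (p : seq T) : R :=
  match p with
  | [::] => 0
  | y :: p' => w x y + wlen w y p'
  end.

Definition is_tree (E : rel T) : Prop :=
  forall x y : T, exists! p : seq T,
    [/\ path E x p, last x p = y & uniq (x :: p)].

Definition is_tree_metric (E : rel T) (w d : T -> T -> R) : Prop :=
  forall (x y : T) (p : seq T),
    path E x p -> last x p = y -> uniq (x :: p) -> d x y = wlen w x p.

(* A strategy profile: agent u buys arcs to the points in s u. *)
Definition profile := T -> {set T}.

Definition valid_profile (s : profile) : Prop := forall u, u \notin s u.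

Definition upd (s : profile) (u : T) (S : {set T}) : profile :=
  fun x => if x == u then S else s x.

Definition greedy (d : T -> T -> R) (s : profile) (u v : T) (p : seq T) : bool :=
  path (fun a b => (b \in s a) && (d b v < d a v)) u p && (last u p == v).

Fixpoint all_seqs (n : nat) : seq (seq T) :=
  match n with
  | 0 => [:: [::]]
  | n'.+1 => [seq x :: p | x <- enum T, p <- all_seqs n']
  end.

(* all sequences of length < #|T|; every greedy path visits distinct points
   (distance to v strictly decreases), so every greedy path is among them. *)
Definition cand_seqs : seq (seq T) := flatten [seq all_seqs k | k <- iota 0 #|T|].

Definition greedy_lengths (d : T -> T -> R) (s : profile) (u v : T) : seq R :=
  [seq wlen d u p | p <- cand_seqs & greedy d s u v p].

Definition stretch (d : T -> T -> R) (Z : R) (s : profile) (u v : T) : R :=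
  match greedy_lengths d s u v with
  | [::] => Z
  | l0 :: ls => (\big[Num.min/l0]_(l <- ls) l) / d u v
  end.

Definition cost (d : T -> T -> R) (Z alpha : R) (s : profile) (u : T) : R :=
  \sum_(v | v != u) stretch d Z s u v + alpha * #|s u|%:R.

Definition best_response (d : T -> T -> R) (Z alpha : R) (s : profile) (u : T)
  (S : {set T}) : Prop :=
  u \notin S /\
  forall S' : {set T}, u \notin S' ->
    cost d Z alpha (upd s u S) u <= cost d Z alpha (upd s u S') u.

Definition nash_eq (d : T -> T -> R) (Z alpha : R) (s : profile) : Prop :=
  forall u, best_response d Z alpha s u (s u).

Definition br_step (d : T -> T -> R) (Z alpha : R) (s s' : profile) : Prop :=
  exists u S, best_response d Z alpha s u S /\ s' = upd s u S.

Inductive br_reach (d : T -> T -> R) (Z alpha : R) : profile -> profile -> Prop :=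
  | br_refl s : br_reach d Z alpha s s
  | br_cons s s' s'' : br_step d Z alpha s s' -> br_reach d Z alpha s' s'' ->
                       br_reach d Z alpha s s''.

End Game.

(* Call an edge (a, b) of the tree settled when the arcs of a into the branch
   behind b reduce to the single arc to b.  If every edge whose branch is
   smaller than the branch behind y is settled, the tree path from y to any
   node of that branch is greedy, so the single arc u -> y gives stretch 1 to
   the whole branch.  For a penalty Z >= alpha + 2 this beats every other way
   of buying arcs into the branch: no arc costs the penalty towards y, one
   arc to another node x gives stretch > 1 towards y, and several arcs cost at
   least one alpha more.  Hence every best response of u settles (u, y), one
   round in which all agents best-respond settles all edges with branches of
   size k + 1 once those of size k are settled, and after #|T| rounds a best
   response of u must coincide with its current strategy. *)

From mathcomp Require Import all_boot all_order all_algebra.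
From mathcomp Require Import lra.
Import Order.TTheory GRing.Theory Num.Theory.
Local Open Scope ring_scope.

Lemma mem_all_seqs (T : finType) (p : seq T) : p \in all_seqs T (size p).
Proof.
elim: p => [|x p IHp] /=; first by rewrite inE.
by apply: (allpairs_f (fun x p => x :: p)); rewrite ?mem_enum.
Qed.

Lemma mem_cand_seqs (T : finType) (p : seq T) : (size p < #|T|)%N -> p \in cand_seqs T.
Proof.
move=> ltpT; apply/flatten_mapP; exists (size p); first by rewrite mem_iota.
exact: mem_all_seqs.
Qed.

Lemma uniq_size_lt_card {T : finType} {x : T} {p : seq T} :
  uniq (x :: p) -> (size p < #|T|)%N.
Proof. by move=> /card_uniqP /= <-; exact: max_card. Qed.

Lemma bigmin_seq_mem (disp : Order.disp_t) (T : porderType disp) (x0 : T) (r : seq T) :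
  \big[Order.min/x0]_(x <- r) x \in x0 :: r.
Proof.
rewrite big_seq; elim/big_ind: _ => [|x y xr yr|x xr]; rewrite ?mem_head //.
  by rewrite /Order.min; case: ifP.
by rewrite inE xr orbT.
Qed.

Lemma bigmin_seq_le (disp : Order.disp_t) (T : orderType disp) (x0 : T) (r : seq T) y :
  y \in x0 :: r -> (\big[Order.min/x0]_(x <- r) x <= y)%O.
Proof. by rewrite inE => /predU1P[->|yr]; [exact: bigmin_le_id | exact: ge_bigmin_seq]. Qed.

Section Stretch.
Variables (R : realFieldType) (T : finType) (d : T -> T -> R).
Implicit Types (s : profile T) (u v : T) (p q : seq T).

Lemma greedy_cons s u v y q :
  greedy d s u v (y :: q) = [&& y \in s u, d y v < d u v & greedy d s y v q].
Proof. by rewrite /greedy /= -!andbA. Qed.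

Lemma greedy_uniq {s u v p} : greedy d s u v p -> uniq (u :: p).
Proof.
case/andP=> sp _; apply: (@sorted_uniq _ (fun a b => d b v < d a v)).
- by move=> b a c ltba ltcb; exact: lt_trans ltcb ltba.
- by move=> a; rewrite ltxx.
- by apply: sub_path sp => a b /andP[].
Qed.

Lemma greedy_cand {s u v p} : greedy d s u v p -> p \in cand_seqs T.
Proof. by move/greedy_uniq/uniq_size_lt_card/mem_cand_seqs. Qed.

Lemma eq_greedy_on s1 s2 u v :
  (forall a x, d a v <= d u v -> d x v < d a v -> (x \in s1 a) = (x \in s2 a)) ->
  greedy d s1 u v =1 greedy d s2 u v.
Proof.
move=> eqs p; rewrite /greedy; congr (_ && _).
elim: p u eqs => [|x p IHp] u eqs //=.
have [ltxu|] := ltP (d x v) (d u v); last by rewrite !andbF.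
rewrite (eqs u x (lexx _) ltxu) (IHp x) // => a y leax; apply: eqs.
exact: le_trans leax (ltW ltxu).
Qed.

Lemma eq_stretch s1 s2 Z u v :
  greedy d s1 u v =1 greedy d s2 u v -> stretch d Z s1 u v = stretch d Z s2 u v.
Proof. by move=> eqg; rewrite /stretch /greedy_lengths (eq_filter eqg). Qed.

Variant stretch_spec s Z u v : R -> Prop :=
  | StretchNone of (forall p, ~~ greedy d s u v p) : stretch_spec s Z u v Z
  | StretchMin p of greedy d s u v p
      & (forall q, greedy d s u v q -> wlen d u p <= wlen d u q) :
      stretch_spec s Z u v (wlen d u p / d u v).

Lemma stretchP s Z u v : stretch_spec s Z u v (stretch d Z s u v).
Proof.
rewrite /stretch /greedy_lengths.
have memG q : greedy d s u v q -> q \in [seq p <- cand_seqs T | greedy d s u v p].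
  by move=> gq; rewrite mem_filter gq (greedy_cand gq).
case eG: [seq p <- cand_seqs T | greedy d s u v p] memG => [|p0 ps] memG /=.
  by constructor=> p; apply/negP => /memG.
set m := \big[_/_]_(l <- _) l.
have /mapP[p pG mE] : m \in [seq wlen d u p | p <- p0 :: ps] by exact: bigmin_seq_mem.
have pgreedy : greedy d s u v p by move: pG; rewrite -eG mem_filter => /andP[].
rewrite mE; constructor=> // q /memG qG; rewrite -mE.
by apply: bigmin_seq_le; rewrite -map_cons; apply: map_f.
Qed.

End Stretch.

Section Dynamics.
Context {R : realFieldType} {T : finType}.
Variables (d : T -> T -> R) (Z alpha : R).

Lemma upd_same (s : profile T) u S : upd s u S u = S.
Proof. by rewrite /upd eqxx. Qed.

Lemma upd_other (s : profile T) u S a : a != u -> upd s u S a = s a.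
Proof. by rewrite /upd => /negbTE->. Qed.

Lemma best_response_exists (s : profile T) u : exists B, best_response d Z alpha s u B.
Proof.
have u0 : u \notin (set0 : {set T}) by rewrite inE.
case: (@arg_minP _ R {set T} set0 (fun S => u \notin S)
  (fun S => cost d Z alpha (upd s u S) u) u0) => B uB minB.
by exists B.
Qed.

Lemma br_reach_trans (s1 s2 s3 : profile T) :
  br_reach d Z alpha s1 s2 -> br_reach d Z alpha s2 s3 -> br_reach d Z alpha s1 s3.
Proof. by elim=> // a b c ab _ IH /IH; apply: br_cons. Qed.

End Dynamics.

Section Tree.
Context {R : realFieldType} {T : finType} {E : rel T} {w d : T -> T -> R}.
Hypotheses (Esym : symmetric E) (Eirr : irreflexive E)
  (w_gt0 : forall x y, E x y -> 0 < w x y)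
  (treeE : is_tree E) (metric_d : is_tree_metric E w d).
Implicit Types (a b c u v x y z : T) (p q : seq T) (B : {set T}) (s : profile T).

Definition tree_path x y p := [&& path E x p, last x p == y & uniq (x :: p)].

Lemma tree_path_inj x y p q : tree_path x y p -> tree_path x y q -> p = q.
Proof.
case: (treeE x y) => p0 [_ uniqP] /and3P[Ep /eqP lp up] /and3P[Eq /eqP lq uq].
by rewrite -(uniqP p (And3 Ep lp up)) -(uniqP q (And3 Eq lq uq)).
Qed.

Definition tpath x y := head [::] [seq p <- cand_seqs T | tree_path x y p].

Lemma tpathP x y : tree_path x y (tpath x y).
Proof.
case: (treeE x y) => p [[Ep lp up] _].
have tp : tree_path x y p by rewrite /tree_path Ep lp up eqxx.
rewrite /tpath; have : p \in [seq p <- cand_seqs T | tree_path x y p].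
  by rewrite mem_filter tp mem_cand_seqs // (uniq_size_lt_card up).
case eqG: [seq _ <- _ | _] => [|q ps] //= _.
have : q \in [seq p <- cand_seqs T | tree_path x y p] by rewrite eqG mem_head.
by rewrite mem_filter => /andP[].
Qed.

Lemma tpath_eq {x y p} : tree_path x y p -> tpath x y = p.
Proof. exact: tree_path_inj (tpathP x y). Qed.

Lemma tpathxx x : tpath x x = [::].
Proof. by apply: tpath_eq; rewrite /tree_path /= eqxx. Qed.

Lemma edge_neq {a b} : E a b -> a != b.
Proof. by apply: contraTneq => ->; rewrite Eirr. Qed.

Lemma tpath_edge a b : E a b -> tpath a b = [:: b].
Proof.
by move=> Eab; apply: tpath_eq; rewrite /tree_path /= Eab eqxx inE edge_neq.
Qed.

Lemma tree_path_behead {a v b q} : tree_path a v (b :: q) -> tree_path b v q.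
Proof. by rewrite /tree_path /= => /and3P[/andP[_ ->] -> /andP[_ ->]]. Qed.

Lemma tpath_behead {a v b q} : tpath a v = b :: q -> tpath b v = q.
Proof. by move=> eq; apply/tpath_eq/(@tree_path_behead a); rewrite -eq tpathP. Qed.

Definition hop x v := head x (tpath x v).

Definition branch a b := [set t | hop a t == b].

Lemma hop_tree_path {x y p z} : tree_path x y p -> z \in p -> hop x z = head x p.
Proof.
move=> + zp; case/splitPr: zp => p1 p2 /and3P[Ep _ up].
suff /tpath_eq : tree_path x z (p1 ++ [:: z]) by rewrite /hop => ->; case: p1 {Ep up}.
have {}up : uniq (x :: p1 ++ [:: z]).
  by move: up; rewrite -(cat1s z p2) catA -cat_cons cat_uniq => /andP[].
move: Ep; rewrite /tree_path up !cat_path last_cat /= eqxx !andbT.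
by case/and3P=> -> ->.
Qed.

Lemma tpath_hop {a v} : a != v -> tpath a v = hop a v :: tpath (hop a v) v.
Proof.
move=> av; rewrite /hop; case eqp: (tpath a v) => [|b q] /=; last by rewrite (tpath_behead eqp).
by move: (tpathP a v); rewrite eqp /tree_path /= => /andP[/eqP va]; rewrite va eqxx in av.
Qed.

Lemma hop_edge {u v} : v != u -> E u (hop u v).
Proof. by rewrite eq_sym => /tpath_hop uv; have := tpathP u v; rewrite uv => /and3P[/andP[]]. Qed.

Lemma tpath_back {a b v} : E a b -> hop a v != b -> tpath b v = a :: tpath a v.
Proof.
move=> Eab hopab; apply: tpath_eq.
have /and3P[Ep lp /= /andP[av up]] := tpathP a v.
rewrite /tree_path /= Esym Eab Ep lp av up !andbT inE negb_or eq_sym edge_neq //=.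
apply: contra hopab => bp.
by rewrite /hop -(hop_tree_path (tpathP a v) bp) /hop tpath_edge.
Qed.

Lemma hop_back {a b v} : E a b -> hop a v != b -> hop b v = a.
Proof. by move=> Eab /(tpath_back Eab); rewrite /hop => ->. Qed.

Lemma hop_branch a b : E a b -> hop a b = b.
Proof. by move=> Eab; rewrite /hop tpath_edge. Qed.

Lemma mem_branch_edge {u y} : E u y -> y \in branch u y.
Proof. by move=> Euy; rewrite inE hop_branch. Qed.

Lemma notin_branch_root {u y} : E u y -> u \notin branch u y.
Proof. by move=> Euy; rewrite inE /hop tpathxx edge_neq. Qed.

Lemma branch_child a b c : E a b -> E b c -> c != a ->
  branch b c \subset branch a b :\ b.
Proof.
move=> Eab Ebc ca; apply/subsetP => t; rewrite !inE => /eqP hopbt.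
have -> : hop a t = b by apply: hop_back; rewrite 1?Esym // hopbt.
rewrite eqxx andbT; apply: contraNneq (edge_neq Ebc) => tb.
by rewrite -hopbt tb /hop tpathxx.
Qed.

Lemma card_branch_child a b c : E a b -> E b c -> c != a ->
  (#|branch b c| < #|branch a b|)%N.
Proof.
move=> Eab Ebc ca; rewrite (cardsD1 b (branch a b)) mem_branch_edge // ltnS.
exact/subset_leq_card/branch_child.
Qed.

Lemma dist_tpath x y : d x y = wlen w x (tpath x y).
Proof. by have /and3P[Ep /eqP lp up] := tpathP x y; apply: metric_d. Qed.

Lemma distxx x : d x x = 0.
Proof. by rewrite dist_tpath tpathxx. Qed.

Lemma dist_edge {a b} : E a b -> d a b = w a b.
Proof. by move=> Eab; rewrite dist_tpath tpath_edge //= addr0. Qed.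

Lemma wlen_ge0 a p : path E a p -> 0 <= wlen w a p.
Proof.
elim: p a => [|b p IHp] a //= /andP[Eab Ep].
by rewrite addr_ge0 ?IHp // ltW ?w_gt0.
Qed.

Lemma dist_ge0 x y : 0 <= d x y.
Proof. by rewrite dist_tpath; apply: wlen_ge0; have /and3P[] := tpathP x y. Qed.

Lemma dist_hop {a v} : a != v -> d a v = w a (hop a v) + d (hop a v) v.
Proof. by move=> av; rewrite !dist_tpath (tpath_hop av). Qed.

Lemma dist_branch {u y v} : E u y -> v \in branch u y -> d u v = w u y + d y v.
Proof.
move=> Euy vT; have uv : u != v by apply: contraTneq vT => <-; exact: notin_branch_root.
by rewrite (dist_hop uv); move: vT; rewrite inE => /eqP->.
Qed.

Lemma dist_gt0 x y : x != y -> 0 < d x y.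
Proof.
move=> xy; rewrite dist_hop // ltr_wpDr ?dist_ge0 // w_gt0 // hop_edge //.
by rewrite eq_sym.
Qed.

Lemma dist_back {a b v} : E a b -> hop a v != b -> d b v = w b a + d a v.
Proof. by move=> Eab /(tpath_back Eab) eqp; rewrite !dist_tpath eqp. Qed.

Lemma dist_le_edge a b v : E a b -> d a v <= w a b + d b v.
Proof.
move=> Eab; have Eba : E b a by rewrite Esym.
have [hopbv|] := eqVneq (hop b v) a; last first.
  by move=> /(dist_back Eba) ->; rewrite lexx.
have bv : b != v.
  by apply/eqP => bv; move: hopbv; rewrite -bv /hop tpathxx /= => ba; rewrite ba Eirr in Eab.
rewrite (dist_hop bv) hopbv.
have := w_gt0 _ _ Eab; have := w_gt0 _ _ Eba; have := dist_ge0 a v; lra.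
Qed.

Lemma dist_le_wlen a p : path E a p -> d a (last a p) <= wlen w a p.
Proof.
elim: p a => [|b p IHp] a /=; first by rewrite distxx.
case/andP=> Eab /IHp; have := dist_le_edge _ _ (last b p) Eab; lra.
Qed.

Lemma wlen_cat (f : T -> T -> R) a p q :
  wlen f a (p ++ q) = wlen f a p + wlen f (last a p) q.
Proof. by elim: p a => [|b p IHp] a /=; rewrite ?add0r // IHp addrA. Qed.

Lemma dist_triangle a b c : d a c <= d a b + d b c.
Proof.
have /and3P[Eab /eqP lab _] := tpathP a b.
have /and3P[Ebc /eqP lbc _] := tpathP b c.
have := @dist_le_wlen a (tpath a b ++ tpath b c).
by rewrite cat_path Eab lab Ebc last_cat lab lbc wlen_cat lab -!dist_tpath; apply.
Qed.

Lemma dist_le_wlen_dist u p : d u (last u p) <= wlen d u p.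
Proof.
elim: p u => [|b p IHp] u /=; first by rewrite distxx.
have := dist_triangle u b (last b p); have := IHp b; lra.
Qed.

Lemma dist_away v a b q : path E a (b :: q) -> uniq (a :: b :: q) -> hop a v != b ->
  d a v <= d (last b q) v.
Proof.
elim: q a b => [|c q IHq] a b /andP[Eab Ep] uab hopab;
  have Eba : E b a by rewrite Esym.
  by rewrite (dist_back Eab hopab); have := w_gt0 _ _ Eba; lra.
have hopbc : hop b v != c.
  by rewrite (hop_back Eab hopab); move: uab; rewrite /= !inE !negb_or => /and3P[/and3P[]].
move: uab => /andP[_ ubq]; have := IHq b c Ep ubq hopbc.
by rewrite (dist_back Eab hopab); have := w_gt0 _ _ Eba; lra.
Qed.

Lemma dist_other_branch u x v : hop u x != hop u v -> d u v <= d x v.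
Proof.
have /and3P[] := tpathP u x; rewrite /hop.
case: (tpath u x) => [_ /= /eqP <- _ | b q Ep /eqP <- uq hopuv]; first by rewrite lexx.
by apply: (dist_away v u b q Ep uq); rewrite eq_sym.
Qed.

Lemma stretch_ge1 {s Z u v} : u != v -> 1 <= Z -> 1 <= stretch d Z s u v.
Proof.
move=> uv Z1; case: stretchP => // p /andP[_ /eqP lp] _.
by rewrite ler_pdivlMr ?dist_gt0 // mul1r -{1}lp dist_le_wlen_dist.
Qed.

Lemma stretch_gt1 s Z u v : u != v -> 1 < Z ->
  (forall p, greedy d s u v p -> d u v < wlen d u p) -> 1 < stretch d Z s u v.
Proof.
move=> uv Z1 longer; case: stretchP => // p gp _.
by rewrite ltr_pdivlMr ?dist_gt0 // mul1r longer.
Qed.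

Lemma stretch_geodesic s Z u v p : u != v -> greedy d s u v p -> wlen d u p = d u v ->
  stretch d Z s u v = 1.
Proof.
move=> uv gp lenp; case: stretchP => [/(_ p)|q /andP[_ /eqP lq] minq]; first by rewrite gp.
suff -> : wlen d u q = d u v by rewrite divff // gt_eqF ?dist_gt0.
apply: le_anti; rewrite -{2}lq dist_le_wlen_dist andbT -lenp; exact: minq.
Qed.

Lemma stretch_none s Z u v : (forall p, ~~ greedy d s u v p) -> stretch d Z s u v = Z.
Proof. by move=> nog; case: stretchP => // p; rewrite (negbTE (nog p)). Qed.

Definition greedy_geodesic s y v := exists2 q, greedy d s y v q & wlen d y q = d y v.

Definition settled_at k s a := forall b, E a b -> (#|branch a b| <= k)%N ->
  s a :&: branch a b = [set b].

Definition settled k s := forall a, settled_at k s a.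

Lemma settled_arc {k s a b} : settled k s -> E a b -> (#|branch a b| <= k)%N -> b \in s a.
Proof. by move=> sett Eab /(sett a b Eab)/setP/(_ b); rewrite in_setI set11 => /andP[]. Qed.

Lemma greedy_tree_path {k s v a b q} : settled k s ->
  tree_path a v (b :: q) -> (#|branch a b| <= k)%N ->
  greedy d s a v (b :: q) /\ wlen d a (b :: q) = d a v.
Proof.
move=> sett; elim: q a b => [|c q IHq] a b tp cardk.
  move: (tp) => /and3P[/andP[Eab _] /eqP /= bv _]; rewrite -bv /greedy /= eqxx distxx.
  by rewrite (settled_arc sett) // dist_gt0 ?edge_neq // dist_edge // addr0.
move: (tp) => /and3P[/= /and3P[Eab Ebc _] _ /and3P[]]; rewrite !inE !negb_or.
case/and3P=> _ ac _ _ _.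
have cardbc : (#|branch b c| <= k)%N.
  by apply: ltnW; apply: leq_trans cardk; apply: card_branch_child; rewrite // eq_sym.
have [gb lenb] := IHq b c (tree_path_behead tp) cardbc.
have dav : d a v = w a b + d b v by rewrite !dist_tpath (tpath_eq tp) (tpath_eq (tree_path_behead tp)).
split; last by rewrite dav -dist_edge // -lenb.
by rewrite greedy_cons gb (settled_arc sett) // andbT dav ltr_pwDl ?w_gt0.
Qed.

Lemma settled_geodesic {k s u y v} : settled k s -> E u y -> (#|branch u y| <= k.+1)%N ->
  v \in branch u y -> greedy_geodesic s y v.
Proof.
move=> sett Euy cardk vT; have [<-|yv] := eqVneq y v.
  by exists [::]; rewrite /greedy ?distxx ?eqxx.
have uv : u != v by apply: contraTneq vT => <-; exact: notin_branch_root.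
have hopuv : hop u v = y by move: vT; rewrite inE => /eqP.
have tpy : tree_path y v (hop y v :: tpath (hop y v) v) by rewrite -(tpath_hop yv) tpathP.
have uc : hop y v != u.
  have /and3P[_ _] := tpathP u v; rewrite (tpath_hop uv) hopuv (tpath_hop yv).
  by rewrite /= !inE !negb_or => /andP[/and3P[_ + _] _]; rewrite eq_sym.
have cardyc : (#|branch y (hop y v)| <= k)%N.
  rewrite -ltnS; apply: leq_trans cardk.
  by apply: card_branch_child; rewrite // hop_edge // eq_sym.
have [gy leny] := greedy_tree_path sett tpy cardyc.
by exists (tpath y v); rewrite (tpath_hop yv).
Qed.

Lemma hop_closer {u x v} : d x v < d u v -> hop u x = hop u v.
Proof. by apply: contraTeq => /dist_other_branch; rewrite leNgt. Qed.

Section BranchRepair.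
Context {s : profile T} {u y : T} {Z alpha : R}.
Hypotheses (Euy : E u y) (alpha_gt0 : 0 < alpha) (Z_ge : alpha + 2 <= Z)
  (ready : forall v, v \in branch u y -> greedy_geodesic s y v).

Lemma stretch_off_branch {B1 B2 : {set T}} {v} :
  (forall x, x \notin branch u y -> (x \in B1) = (x \in B2)) -> v \notin branch u y ->
  stretch d Z (upd s u B1) u v = stretch d Z (upd s u B2) u v.
Proof.
move=> eqB vT; apply/eq_stretch/eq_greedy_on => a x _ ltxa.
rewrite /upd; case: eqP => // au; rewrite au in ltxa.
by apply: eqB; move: vT; rewrite !inE (hop_closer ltxa).
Qed.

Lemma stretch_into_branch B v : y \in B -> v \in branch u y ->
  stretch d Z (upd s u B) u v = 1.
Proof.
move=> yB vT; have [q gq lenq] := ready v vT.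
have uv : u != v by apply: contraTneq vT => <-; exact: notin_branch_root.
have duv := dist_branch Euy vT.
have ltyu : d y v < d u v by rewrite duv ltr_pwDl ?w_gt0.
have gq' : greedy d (upd s u B) y v q.
  rewrite (@eq_greedy_on _ _ _ _ s) // => a x leay _; rewrite /upd; case: eqP => // au.
  by move: leay; rewrite au leNgt ltyu.
apply: (@stretch_geodesic _ _ _ _ (y :: q)) => //.
  by rewrite greedy_cons upd_same yB ltyu.
by rewrite /= lenq dist_edge // duv.
Qed.

Lemma greedy_to_edge {B p} : greedy d (upd s u B) u y p ->
  exists x q, p = x :: q /\ x \in B :&: branch u y.
Proof.
case: p => [|x q]; first by rewrite /greedy /= => /eqP uy; move: Euy; rewrite uy Eirr.
rewrite greedy_cons upd_same => /and3P[xB ltxu _]; exists x, q; split=> //.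
by rewrite in_setI xB inE (hop_closer ltxu) hop_branch ?eqxx.
Qed.

Lemma stretch_edge_unreachable B : B :&: branch u y = set0 ->
  stretch d Z (upd s u B) u y = Z.
Proof.
move=> B0; apply: stretch_none => p; apply/negP => /greedy_to_edge[x [q [_]]].
by rewrite B0 inE.
Qed.

Lemma stretch_edge_detour {B x} : 1 < Z -> B :&: branch u y = [set x] -> x != y ->
  1 < stretch d Z (upd s u B) u y.
Proof.
move=> Z1 Bx xy; apply: stretch_gt1 => //; first exact: edge_neq.
move=> p gp; have [x' [q [pE]]] := greedy_to_edge gp.
rewrite Bx inE => /eqP x'x; subst p x'.
have /andP[_ /eqP /= lq] := gp.
have xT : x \in branch u y by have := set11 x; rewrite -Bx in_setI => /andP[].
have dux := dist_branch Euy xT.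
have := dist_le_wlen_dist x q; rewrite lq => lenq.
have := dist_gt0 y x; rewrite eq_sym xy => /(_ isT) dyx.
have := dist_ge0 x y; rewrite /= dux (dist_edge Euy); lra.
Qed.

Lemma stretch_price_gt {B} : B :&: branch u y != [set y] ->
  1 + alpha < stretch d Z (upd s u B) u y + alpha * #|B :&: branch u y|%:R.
Proof.
move=> By; have a0 := alpha_gt0; have Za := Z_ge; have Z1 : 1 < Z by lra.
case cardB: #|B :&: branch u y| => [|[|n]].
- by rewrite stretch_edge_unreachable ?mulr0n ?mulr0; [lra | exact: cards0_eq].
- have /cards1P[x Bx] : #|B :&: branch u y| == 1%N by rewrite cardB.
  have xy : x != y by apply: contraNneq By => xy; rewrite Bx xy.
  by have := stretch_edge_detour Z1 Bx xy; lra.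
- have := @stretch_ge1 (upd s u B) _ _ _ (edge_neq Euy) (ltW Z1).
  have : alpha * 2 <= alpha * n.+2%:R by rewrite ler_pM2l // ler_nat.
  lra.
Qed.

Lemma cost_branch_repair B : B :&: branch u y != [set y] ->
  cost d Z alpha (upd s u (y |: (B :\: branch u y))) u < cost d Z alpha (upd s u B) u.
Proof.
move=> By; set B' := y |: _.
have yu : y != u by rewrite eq_sym edge_neq.
have agree x : x \notin branch u y -> (x \in B') = (x \in B).
  move=> xT; rewrite in_setU1 in_setD xT /=.
  by have -> : x == y = false by apply: contraNF xT => /eqP->; exact: mem_branch_edge.
have le_rest v : v != u -> stretch d Z (upd s u B') u v <= stretch d Z (upd s u B) u v.
  move=> vu; have [vT|vT] := boolP (v \in branch u y); last by rewrite (stretch_off_branch agree vT).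
  rewrite stretch_into_branch ?setU11 //; apply: stretch_ge1; first by rewrite eq_sym.
  by have := alpha_gt0; have := Z_ge; lra.
have le_sum : \sum_(v | (v != u) && (v != y)) stretch d Z (upd s u B') u v <=
              \sum_(v | (v != u) && (v != y)) stretch d Z (upd s u B) u v.
  by apply: ler_sum => v /andP[vu _]; exact: le_rest.
have cardB' : #|B'| = (#|B :\: branch u y| + 1)%N.
  by rewrite cardsU1 in_setD mem_branch_edge // addnC.
have sty : stretch d Z (upd s u B') u y = 1.
  by apply: stretch_into_branch; rewrite ?setU11 ?mem_branch_edge.
rewrite /cost !upd_same (bigD1 y) // [in X in _ < X](bigD1 y) //= sty.
move: le_sum (stretch_price_gt By).
by rewrite cardB' -(cardsID (branch u y) B) !natrD !mulrDr mulr1; lra.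
Qed.

Lemma best_response_branch B : best_response d Z alpha s u B -> B :&: branch u y = [set y].
Proof.
case=> uB minB; apply/eqP; apply: contraT => By.
have uB' : u \notin y |: (B :\: branch u y).
  by rewrite in_setU1 in_setD (negbTE uB) andbF orbF edge_neq.
by have := minB _ uB'; rewrite leNgt cost_branch_repair.
Qed.

End BranchRepair.

Lemma best_response_settled_at {Z alpha k s u B} : 0 < alpha -> alpha + 2 <= Z ->
  settled k s -> best_response d Z alpha s u B -> settled_at k.+1 (upd s u B) u.
Proof.
move=> a0 Za sett brB y Euy cardk; rewrite upd_same.
apply: (best_response_branch Euy a0 Za _ B brB) => v vT.
exact: settled_geodesic sett Euy cardk vT.
Qed.

Lemma settled_atW k m s a : (k <= m)%N -> settled_at m s a -> settled_at k s a.
Proof. by move=> km sett b Eab cardk; apply: sett; rewrite // (leq_trans cardk). Qed.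

Lemma settled_at_upd k s u S a : a != u -> settled_at k s a -> settled_at k (upd s u S) a.
Proof. by move=> au; rewrite /settled_at upd_other. Qed.

Lemma settled0 s : settled 0 s.
Proof.
move=> a b Eab; rewrite leqn0 cards_eq0 => /eqP b0.
by have := mem_branch_edge Eab; rewrite b0 inE.
Qed.

Lemma settled_strategy_eq u (S1 S2 : {set T}) : u \notin S1 -> u \notin S2 ->
  (forall b, E u b -> S1 :&: branch u b = [set b]) ->
  (forall b, E u b -> S2 :&: branch u b = [set b]) -> S1 = S2.
Proof.
move=> uS1 uS2 S1b S2b; apply/setP => v.
have [->|vu] := eqVneq v u; first by rewrite (negbTE uS1) (negbTE uS2).
have Euv := hop_edge vu; have vT : v \in branch u (hop u v) by rewrite inE.
move: (S1b _ Euv) (S2b _ Euv) => /setP/(_ v) + /setP/(_ v).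
by rewrite !in_setI vT !andbT => -> ->.
Qed.

Section Rounds.
Context {Z alpha : R}.
Hypotheses (alpha_gt0 : 0 < alpha) (Z_ge : alpha + 2 <= Z).

Lemma settle_round k (l : seq T) s : valid_profile s -> settled k s ->
  exists s', [/\ br_reach d Z alpha s s', valid_profile s', settled k s'
                & {in l, forall a, settled_at k.+1 s' a}].
Proof.
elim: l s => [|u l IHl] s val sett; first by exists s; split=> //; exact: br_refl.
have [s1 [r1 val1 sett1 l1]] := IHl s val sett.
have [B brB] := best_response_exists d Z alpha s1 u.
have settu := best_response_settled_at alpha_gt0 Z_ge sett1 brB.
exists (upd s1 u B); split.
- by apply: br_reach_trans r1 (br_cons _ (br_refl _ _ _ _)); exists u, B.
- move=> a; have [->|au] := eqVneq a u; first by rewrite upd_same; case: brB.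
  by rewrite upd_other.
- move=> a; have [->|au] := eqVneq a u; first exact: settled_atW settu.
  exact: settled_at_upd.
- move=> a; rewrite inE; have [->|au] := eqVneq a u; first by [].
  by move=> /l1; apply: settled_at_upd.
Qed.

Lemma settled_reachable s0 k : valid_profile s0 ->
  exists s, [/\ br_reach d Z alpha s0 s, valid_profile s & settled k s].
Proof.
move=> val0; elim: k => [|k [s [r val sett]]].
  by exists s0; split; [exact: br_refl | | exact: settled0].
have [s' [r' val' _ all']] := settle_round k (enum T) s val sett.
exists s'; split=> //; first exact: br_reach_trans r r'.
by move=> a; apply: all'; rewrite mem_enum.
Qed.

Lemma settled_nash s : valid_profile s -> settled #|T| s -> nash_eq d Z alpha s.
Proof.
move=> val sett u; have [B brB] := best_response_exists d Z alpha s u.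
suff -> : s u = B by [].
have settB := best_response_settled_at alpha_gt0 Z_ge sett brB.
apply: settled_strategy_eq (val u) _ _ _; first by case: brB.
  by move=> b Eub; apply: sett; rewrite // max_card.
by move=> b Eub; rewrite -(upd_same s u B); apply: settB; rewrite // ltnW // ltnS max_card.
Qed.

End Rounds.

End Tree.

Theorem theorem3p5 (R : realFieldType) (T : finType) (E : rel T)
  (w d : T -> T -> R) (alpha : R) :
  symmetric E -> irreflexive E ->
  (forall x y, E x y -> w x y = w y x) ->
  (forall x y, E x y -> 0 < w x y) ->
  is_tree E -> is_tree_metric E w d ->
  0 < alpha ->
  exists Z0 : R, forall Z : R, Z0 <= Z ->
    forall s0 : profile T, valid_profile s0 ->
      exists s : profile T, br_reach d Z alpha s0 s /\ nash_eq d Z alpha s.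
Proof.
move=> Esym Eirr _ w_gt0 treeE metric_d alpha_gt0.
exists (alpha + 2) => Z Z_ge s0 val0.
have [s [reach val sett]] :=
  settled_reachable Esym Eirr w_gt0 treeE metric_d alpha_gt0 Z_ge s0 #|T| val0.
have nash := settled_nash Esym Eirr w_gt0 treeE metric_d alpha_gt0 Z_ge s val sett.
by exists s.
Qed.
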